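(* Let $f:E\to X$ be a fibrewise pointed map over $B$. Then $\mathrm{secat}_B(f)\le\mathrm{cat}^*_B(X)$. If moreover $E$ is fibrewise contractible, then $\mathrm{secat}_B(f)=\mathrm{cat}^*_B(X)$.
   Context: Fibrewise space over $B$: a space $X$ with a map $p_X:X\to B$; fibrewise map: $p_Yf=p_X$; fibrewise pointed space: with a section $s_X$ of $p_X$; fibrewise pointed map: fibrewise map with $fs_E=s_X$. Fibrewise homotopy: $H:X\times[0,1]\to Y$ with $p_Y(H(x,t))=p_X(x)$ ($\simeq_B$). A fibrewise space is fibrewise contractible if it is fibrewise homotopy equivalent to $B$ (with projection $\mathrm{id}_B$). $\mathrm{secat}_B(f)$: least $n$ such that $X$ is covered by $n+1$ open sets $U$ each with a fibrewise map $s:U\to E$, $fs\simeq_B$ the inclusion $U\hookrightarrow X$. $\mathrm{cat}^*_B(X)$: least $n$ such that $X$ is covered by $n+1$ open sets $U_i$ with inclusion $U_i\hookrightarrow X$ fibrewise homotopic to $s_X\circ p_X|_{U_i}$. Both $\infty$ if no such $n$. *)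

From HB Require Import structures.
From mathcomp Require Import all_boot all_order all_algebra.
From mathcomp Require Import all_classical all_reals all_analysis.
Set Implicit Arguments. Unset Strict Implicit. Unset Printing Implicit Defensive.
Import Order.TTheory GRing.Theory Num.Theory.
Import numFieldNormedType.Exports.
Local Open Scope classical_set_scope.
Local Open Scope ring_scope.

(* The unit interval [0,1] is taken inside an arbitrary realType R.
   Maps defined on a subset U of X are represented by total functions whose
   values only matter on U (continuity taken "within U"). *)

Definition fw_homotopic (R : realType) (B X Y : topologicalType)
    (pX : X -> B) (pY : Y -> B) (U : set X) (f g : X -> Y) : Prop :=
  exists H : X * R -> Y,
    {within U `*` [set t : R | 0 <= t <= 1], continuous H} /\
    (forall x, U x -> H (x, 0) = f x /\ H (x, 1) = g x) /\
    (forall x t, U x -> 0 <= t <= 1 -> pY (H (x, t)) = pX x).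

Definition fw_space (B X : topologicalType) (pX : X -> B) : Prop :=
  continuous pX.

Definition fw_pointed_space (B X : topologicalType) (pX : X -> B) (sX : B -> X)
  : Prop := continuous pX /\ continuous sX /\ (forall b, pX (sX b) = b).

Definition fw_map (B X Y : topologicalType) (pX : X -> B) (pY : Y -> B)
  (f : X -> Y) : Prop := continuous f /\ (forall x, pY (f x) = pX x).

Definition fw_pointed_map (B E X : topologicalType) (pE : E -> B) (sE : B -> E)
  (pX : X -> B) (sX : B -> X) (f : E -> X) : Prop :=
  fw_map pE pX f /\ (forall b, f (sE b) = sX b).

Definition fw_homotopy_equivalent (R : realType) (B X Y : topologicalType)
    (pX : X -> B) (pY : Y -> B) : Prop :=
  exists (g : X -> Y) (h : Y -> X),
    fw_map pX pY g /\ fw_map pY pX h /\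
    fw_homotopic R pX pX setT (h \o g) id /\
    fw_homotopic R pY pY setT (g \o h) id.

Definition fw_contractible (R : realType) (B E : topologicalType) (pE : E -> B)
  : Prop := fw_homotopy_equivalent R pE (@id B).

Definition secatB_le (R : realType) (B E X : topologicalType)
    (pE : E -> B) (pX : X -> B) (f : E -> X) (n : nat) : Prop :=
  exists U : 'I_n.+1 -> set X,
    (forall i, open (U i)) /\ (forall x, exists i, U i x) /\
    forall i, exists s : X -> E,
      {within U i, continuous s} /\
      (forall x, U i x -> pE (s x) = pX x) /\
      fw_homotopic R pX pX (U i) (f \o s) id.

Definition catB_le (R : realType) (B X : topologicalType)
    (pX : X -> B) (sX : B -> X) (n : nat) : Prop :=
  exists U : 'I_n.+1 -> set X,
    (forall i, open (U i)) /\ (forall x, exists i, U i x) /\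
    forall i, fw_homotopic R pX pX (U i) id (sX \o pX).

(* values in the extended reals: least such n, or +oo if none *)
Definition secatB (R : realType) (B E X : topologicalType)
    (pE : E -> B) (pX : X -> B) (f : E -> X) : \bar R :=
  ereal_inf [set (n%:R)%:E | n in [set n | secatB_le R pE pX f n]].

Definition catB (R : realType) (B X : topologicalType)
    (pX : X -> B) (sX : B -> X) : \bar R :=
  ereal_inf [set (n%:R)%:E | n in [set n | catB_le R pX sX n]].

(* If every U_i deforms fibrewise into the section s_X, then s_E ∘ p_X is a
   local fibrewise homotopy section of f over U_i, because f s_E = s_X; so
   secat_B(f) <= cat*_B(X).  Conversely, if E is fibrewise contractible then
   id_E is fibrewise homotopic to s_E ∘ p_E; for a local homotopy section s
   on U this gives id_U ~ f s ~ f s_E p_E s = s_X p_X on U, so every secat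
   cover is a cat* cover. *)
From mathcomp Require Import all_boot all_order all_algebra.
From mathcomp Require Import all_classical all_reals all_analysis.
From mathcomp Require Import lra.
Import Order.TTheory GRing.Theory Num.Theory.
Import numFieldNormedType.Exports.
Local Open Scope classical_set_scope.
Local Open Scope ring_scope.
Set Implicit Arguments. Unset Strict Implicit. Unset Printing Implicit Defensive.

Section SubspaceContinuity.
Context {S T U : topologicalType}.

Lemma continuous_subspace_comp (A : set S) (B : set T) (phi : S -> T)
    (g : T -> U) :
  {within A, continuous phi} -> (forall x, A x -> B (phi x)) ->
  {within B, continuous g} -> {within A, continuous (g \o phi)}.
Proof.
move=> /continuousP cphi AB /continuousP cg; apply/continuousP => W oW.
have [V oV VE] := (open_subspaceP _ _).1 (cg W oW).
have [V' oV' V'E] := (open_subspaceP _ _).1 (cphi V oV).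
apply/open_subspaceP; exists V' => //.
rewrite V'E; apply/seteqP; split => x [Vx Ax]; split => //.
- have : (V `&` B) (phi x) by split => //; apply: AB.
  by rewrite VE => -[].
- have : ((from_subspace B g @^-1` W) `&` B) (phi x) by split => //; apply: AB.
  by rewrite -VE => -[].
Qed.

Lemma continuous_subspace_pair (A : set S) (f : S -> T) (g : S -> U) :
  {within A, continuous f} -> {within A, continuous g} ->
  {within A, continuous (fun x => (f x, g x))}.
Proof. by move=> cf cg x; apply: cvg_pair; [exact: cf | exact: cg]. Qed.

(* Unlike withinU_continuous, C `&` A and C `&` B need not be closed. *)
Lemma continuous_subspace_paste (C A B : set S) (f : S -> T) :
  closed A -> closed B -> C `<=` A `|` B ->
  {within C `&` A, continuous f} -> {within C `&` B, continuous f} ->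
  {within C, continuous f}.
Proof.
move=> cA cB CAB /continuous_closedP ctsA /continuous_closedP ctsB.
apply/continuous_closedP => W cW.
case/closed_subspaceP: (ctsA _ cW) => V1 cV1 V1W.
case/closed_subspaceP: (ctsB _ cW) => V2 cV2 V2W.
apply/closed_subspaceP; exists ((V1 `&` A) `|` (V2 `&` B)).
  by apply: closedU; exact: closedI.
apply/seteqP; split => x.
- case=> [][[V1x Ax]|[V2x Bx]] Cx.
  + by have : (V1 `&` (C `&` A)) x by []; rewrite V1W => -[].
  + by have : (V2 `&` (C `&` B)) x by []; rewrite V2W => -[].
- case=> fx Cx; split => //; case: (CAB x Cx) => [Ax|Bx].
  + have : ((from_subspace (C `&` A) f @^-1` W) `&` (C `&` A)) x by [].
    by rewrite -V1W => -[]; left.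
  + have : ((from_subspace (C `&` B) f @^-1` W) `&` (C `&` B)) x by [].
    by rewrite -V2W => -[]; right.
Qed.

End SubspaceContinuity.

Section FibrewiseHomotopy.
Variables (R : realType) (B : topologicalType).
Let I01 := [set t : R | 0 <= t <= 1].

Lemma continuous_subspace_affine_time {X Y : topologicalType} (U : set X)
    (D : set (X * R)) (H : X * R -> Y) (a b : R) :
  (forall p, D p -> U p.1 /\ I01 (a * p.2 + b)) ->
  {within U `*` I01, continuous H} ->
  {within D, continuous (fun p => H (p.1, a * p.2 + b))}.
Proof.
move=> DUI cH.
change {within D, continuous (H \o fun p => (p.1, a * p.2 + b))}.
apply: (continuous_subspace_comp (B := U `*` I01)).
- apply: continuous_subspaceT => -[x t].
  apply: (@cvg_pair _ _ _ _ (nbhs x) (nbhs (a * t + b))).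
    exact: (@cvg_fst _ _ (nbhs x) (nbhs t)).
  apply: cvgD; last exact: cvg_cst.
  apply: cvgM; first exact: cvg_cst.
  exact: (@cvg_snd _ _ (nbhs x) (nbhs t)).
- by move=> p /DUI.
- exact: cH.
Qed.

Lemma eq_fw_homotopic {X Y : topologicalType} (pX : X -> B) (pY : Y -> B)
    (U : set X) (f g f' g' : X -> Y) :
  {in U, f =1 f'} -> {in U, g =1 g'} ->
  fw_homotopic R pX pY U f g -> fw_homotopic R pX pY U f' g'.
Proof.
move=> ff' gg' [H [cH [Hfg Hp]]]; exists H; split => //; split => // x Ux.
by have := Hfg x Ux; rewrite ff' ?gg' ?inE.
Qed.

Lemma fw_homotopic_postcomp {X Y Z : topologicalType} (pX : X -> B)
    (pY : Y -> B) (pZ : Z -> B) (U : set X) (f g : X -> Y) (k : Y -> Z) :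
  fw_map pY pZ k ->
  fw_homotopic R pX pY U f g -> fw_homotopic R pX pZ U (k \o f) (k \o g).
Proof.
move=> [ck kp] [H [cH [Hfg Hp]]]; exists (k \o H); split; last split.
- by move=> x; exact: (continuous_comp (cH x) (ck _)).
- by move=> x Ux /=; have [-> ->] := Hfg x Ux.
- by move=> x t Ux It /=; rewrite kp Hp.
Qed.

Lemma fw_homotopic_precomp {X E Y : topologicalType} (pX : X -> B)
    (pE : E -> B) (pY : Y -> B) (U : set X) (s : X -> E) (a b : E -> Y) :
  {within U, continuous s} -> (forall x, U x -> pE (s x) = pX x) ->
  fw_homotopic R pE pY setT a b -> fw_homotopic R pX pY U (a \o s) (b \o s).
Proof.
move=> cs sp [K [cK [Kab Kp]]].
exists (fun p => K (s p.1, p.2)); split; last split.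
- change {within U `*` I01, continuous (K \o fun p => (s p.1, p.2))}.
  apply: (continuous_subspace_comp (B := setT `*` I01)); last exact: cK.
  + apply: continuous_subspace_pair.
    * apply: (continuous_subspace_comp (B := U)) => //; last by move=> p [].
      by apply: continuous_subspaceT => p; exact: cvg_fst.
    * by apply: continuous_subspaceT => p; exact: cvg_snd.
  + by move=> p [Up Ip].
- by move=> x Ux /=; apply: Kab.
- by move=> x t Ux It /=; rewrite Kp // sp.
Qed.

Lemma fw_homotopic_sym {X Y : topologicalType} (pX : X -> B) (pY : Y -> B)
    (U : set X) (f g : X -> Y) :
  fw_homotopic R pX pY U f g -> fw_homotopic R pX pY U g f.
Proof.
move=> [H [cH [Hfg Hp]]].
exists (fun p => H (p.1, -1 * p.2 + 1)); split; last split.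
- apply: continuous_subspace_affine_time cH.
  by move=> [x t] [/= Ux /andP[t0 t1]]; split => //; apply/andP; split; lra.
- move=> x Ux /=; rewrite mulr0 add0r mulN1r addNr.
  by have [-> ->] := Hfg x Ux.
- move=> x t Ux /andP[t0 t1] /=; apply: Hp => //; apply/andP; split; lra.
Qed.

(* Both halves are reparametrised by affine maps a t + b, in the form
   expected by continuous_subspace_affine_time. *)
Definition concat_homotopy {X Y : Type} (H1 H2 : X * R -> Y) (p : X * R) : Y :=
  if p.2 <= 2^-1 then H1 (p.1, 2 * p.2 + 0) else H2 (p.1, 2 * p.2 + -1).

Lemma continuous_subspace_concat_homotopy {X Y : topologicalType} (U : set X)
    (H1 H2 : X * R -> Y) :
  {within U `*` I01, continuous H1} -> {within U `*` I01, continuous H2} ->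
  (forall x, U x -> H1 (x, 1) = H2 (x, 0)) ->
  {within U `*` I01, continuous concat_homotopy H1 H2}.
Proof.
move=> cH1 cH2 H12.
have csnd : continuous (@snd X R) by move=> p; exact: cvg_snd.
apply: (@continuous_subspace_paste _ _ _
  (@snd X R @^-1` [set t | t <= 2^-1]) (@snd X R @^-1` [set t | 2^-1 <= t])).
- by apply: preimage_closed; [move=> p _; exact: csnd | exact: closed_le].
- by apply: preimage_closed; [move=> p _; exact: csnd | exact: closed_ge].
- by move=> [x t] _ /=; case: (lerP t 2^-1) => ht; [left | right; exact: ltW].
- apply: (subspace_eq_continuous _
    (continuous_subspace_affine_time (a := 2) (b := 0) _ cH1)).
  + move=> [x t] /set_mem[_ /= ht].
    by rewrite /from_subspace /concat_homotopy /= ht.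
  + move=> [x t] [[/= Ux /andP[t0 t1]] /= ht]; split => //.
    by apply/andP; split; lra.
- apply: (subspace_eq_continuous _
    (continuous_subspace_affine_time (a := 2) (b := -1) _ cH2)).
  + move=> [x t] /set_mem[[/= Ux _] /= ht].
    rewrite /from_subspace /concat_homotopy /=.
    case: ifPn => // ht'; have -> : t = 2^-1 by apply/eqP; rewrite eq_le ht ht'.
    by rewrite mulfV ?pnatr_eq0 // addr0 addrN H12.
  + move=> [x t] [[/= Ux /andP[t0 t1]] /= ht]; split => //.
    by apply/andP; split; lra.
Qed.

Lemma fw_homotopic_trans {X Y : topologicalType} (pX : X -> B) (pY : Y -> B)
    (U : set X) (f g h : X -> Y) :
  fw_homotopic R pX pY U f g -> fw_homotopic R pX pY U g h ->
  fw_homotopic R pX pY U f h.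
Proof.
move=> [H1 [cH1 [H1e H1p]]] [H2 [cH2 [H2e H2p]]].
exists (concat_homotopy H1 H2); split; last split.
- apply: continuous_subspace_concat_homotopy => // x Ux.
  by have [_ ->] := H1e x Ux; have [-> _] := H2e x Ux.
- move=> x Ux; rewrite /concat_homotopy /=.
  have [f0 _] := H1e x Ux; have [_ h1] := H2e x Ux; split.
  + have -> : (0 : R) <= 2^-1 by lra.
    by rewrite mulr0 addr0.
  + have -> : ((1 : R) <= 2^-1) = false by apply/negbTE; rewrite -ltNge; lra.
    by have -> : 2 * 1 + -1 = 1 :> R by lra.
- move=> x t Ux /andP[t0 t1]; rewrite /concat_homotopy /=.
  case: ifPn => ht; [apply: H1p | apply: H2p] => //; apply/andP; split; lra.
Qed.

End FibrewiseHomotopy.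

Section SectionalCategory.
Variables (R : realType) (B E X : topologicalType).
Variables (pE : E -> B) (sE : B -> E) (pX : X -> B) (sX : B -> X) (f : E -> X).

Lemma catB_le_secatB_le (n : nat) :
  continuous pX -> continuous sE -> cancel sE pE ->
  (forall b, f (sE b) = sX b) ->
  catB_le R pX sX n -> secatB_le R pE pX f n.
Proof.
move=> cpX csE sEK f_sE [U [oU [covU hU]]].
exists U; split => //; split => // i.
exists (sE \o pX); split; last split.
- apply: (@continuous_subspaceT X) => x.
  exact: (continuous_comp (cpX x) (csE (pX x))).
- by move=> x _ /=; rewrite sEK.
- apply/fw_homotopic_sym/(eq_fw_homotopic _ _ (hU i)) => //.
  by move=> x _ /=; rewrite f_sE.
Qed.

Lemma fw_contractible_homotopic_section :
  fw_pointed_space pE sE -> fw_contractible R pE ->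
  fw_homotopic R pE pE setT id (sE \o pE).
Proof.
move=> [cpE [csE sEK]] [g [h [[_ gE] [_ [hg_id _]]]]].
have csp : {within setT, continuous (sE \o pE)}.
  apply: (@continuous_subspaceT E) => x.
  exact: (continuous_comp (cpE x) (csE (pE x))).
apply: fw_homotopic_trans (fw_homotopic_sym hg_id) _.
have := fw_homotopic_precomp csp (fun x _ => sEK _) hg_id.
(* g is p_E itself, so h g s_E p_E = h g *)
by apply: eq_fw_homotopic => // x _ /=; rewrite !gE sEK.
Qed.

Lemma secatB_le_catB_le (n : nat) :
  fw_pointed_space pE sE -> fw_pointed_map pE sE pX sX f ->
  fw_contractible R pE -> secatB_le R pE pX f n -> catB_le R pX sX n.
Proof.
move=> ptE [fwf f_sE] /(fw_contractible_homotopic_section ptE) id_sEpE.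
move=> [U [oU [covU hU]]]; exists U; split => //; split => // i.
have [s [cs [sp fs_id]]] := hU i.
apply: fw_homotopic_trans (fw_homotopic_sym fs_id) _.
have := fw_homotopic_postcomp fwf (fw_homotopic_precomp cs sp id_sEpE).
by apply: eq_fw_homotopic => // x /set_mem Ux /=; rewrite f_sE sp.
Qed.

End SectionalCategory.

Lemma ereal_inf_natr_le (R : realType) (P Q : set nat) : P `<=` Q ->
  (ereal_inf [set (n%:R)%:E | n in Q] <=
   ereal_inf [set (n%:R : R)%:E | n in P])%E.
Proof. by move=> PQ; apply: ereal_inf_le_tmp; apply: image_subset. Qed.

Theorem proposition2p2 (R : realType) (B E X : topologicalType)
    (pE : E -> B) (sE : B -> E) (pX : X -> B) (sX : B -> X) (f : E -> X) :
  fw_pointed_space pE sE -> fw_pointed_space pX sX ->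
  fw_pointed_map pE sE pX sX f ->
  ((secatB R pE pX f <= catB R pX sX)%E /\
   (fw_contractible R pE -> secatB R pE pX f = catB R pX sX)).
Proof.
move=> /[dup] ptE [_ [csE sEK]] [cpX _] /[dup] ptf [_ f_sE].
have catB_secatB :
    [set n | catB_le R pX sX n] `<=` [set n | secatB_le R pE pX f n].
  by move=> n; exact: catB_le_secatB_le cpX csE sEK f_sE.
split; first exact: ereal_inf_natr_le.
move=> contrE; apply/eqP; rewrite eq_le; apply/andP; split.
- exact: ereal_inf_natr_le.
- by apply: ereal_inf_natr_le => n; exact: secatB_le_catB_le ptE ptf contrE.
Qed.
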